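(* For $n\ge 2$, $$\sum_{v\in A_n}x^{\ell_{T(A_n)}(v)}=\sum_{k=0}^{n}a(n,k)\,x^k=\prod_{t=2}^{n-1}(1+tx).$$
   Context: $A_n$ is the alternating group on $\{1,\dots,n\}$, $T(A_n)=\{(1\,2)(i\,j)\mid 1\le i<j\le n\}$, $\ell_{T(A_n)}(v)=\min\{r\ge 0\mid v=t_1\cdots t_r,\ t_i\in T(A_n)\}$, and $a(n,k)$ is the number of $v\in A_n$ with $\ell_{T(A_n)}(v)=k$. An empty product equals $1$. *)

From mathcomp Require Import all_boot all_order all_algebra all_fingroup all_solvable.
From Stdlib Require Import ClassicalEpsilon.
Set Implicit Arguments. Unset Strict Implicit. Unset Printing Implicit Defensive.
Import GRing.Theory.

(* Points 1..n of the paper are the ordinals 0..n-1 of 'I_n; so the paper's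
   transposition (1 2) is tperm a b with val a = 0, val b = 1. *)

Definition TAn (n : nat) : {set {perm 'I_n}} :=
  [set s : {perm 'I_n} | [exists a : 'I_n, exists b : 'I_n, exists i : 'I_n,
     exists j : 'I_n, [&& val a == 0%N, val b == 1%N, (i < j)%N &
                         s == (tperm a b * tperm i j)%g]]].

Fixpoint prodsT (n r : nat) : {set {perm 'I_n}} :=
  match r with
  | 0 => [set 1%g]
  | r'.+1 => [set (x * t)%g | x in prodsT n r', t in TAn n]
  end.

(* ell_{T(A_n)}(v) = min { r | v = t_1 ... t_r, t_i in T(A_n) }
   (0 by convention if no such r exists; never happens for v in A_n) *)
Definition ellT (n : nat) (v : {perm 'I_n}) : nat :=
  match excluded_middle_informative (exists r, v \in prodsT n r) with
  | left H => ex_minn (P := fun r => v \in prodsT n r) H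
  | right _ => 0
  end.

Definition aT (n k : nat) : nat :=
  #|[set v in Alt ('I_n) | ellT v == k]|.

(* Write c(s) for the number of cycles of s and (12) for the transposition of
   the first two points.  Every element (12)(ij) of T(A_n) changes c(v) and
   c(v(12)) by at most one each, and every even v <> 1 can be shortened by one
   such element; hence l(v) = n - max(c(v), c(v(12))) on A_n.  Since c(v) and
   c(v(12)) differ by exactly one, pairing v with v(12) turns the classical
   generating function sum_(s in S_n) x^(n - c(s)) = prod_(t < n) (1 + t x)
   into (1 + x) sum_(v in A_n) x^l(v), and (1 + x) cancels against the
   factor t = 1 of the product. *)
From mathcomp Require Import all_boot all_order all_algebra all_fingroup all_solvable.
From mathcomp Require Import zify.
From Stdlib Require Import ClassicalEpsilon.
Import GRing.Theory.
Set Implicit Arguments. Unset Strict Implicit. Unset Printing Implicit Defensive.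

Section CycleCount.
Variable T : finType.
Implicit Types (s : {perm T}) (x y : T).
Local Open Scope group_scope.

Definition ncycles s := #|porbits s|.

Lemma ncycles_mul_tperm s x y :
  ncycles (s * tperm x y) + (x \notin porbit s y).*2 = ncycles s + (x != y).
Proof.
rewrite /ncycles -porbitsV invMg tpermV.
by have := porbits_mul_tperm s^-1 x y; rewrite /= porbitV porbitsV.
Qed.

Lemma ncycles_mul_tperm_ge s x y : ncycles s <= (ncycles (s * tperm x y)).+1.
Proof.
have := ncycles_mul_tperm s x y.
have [sxy|] := boolP (x \in porbit s y); first by case: (x != y) => /=; lia.
by case: eqP => [-> /negP[]|_ /=]; [exact: porbit_id | lia].
Qed.

Lemma ncycles_mul_tperm_neq s x y : x != y ->
  ncycles (s * tperm x y) = (ncycles s).+1 \/ ncycles s = (ncycles (s * tperm x y)).+1.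
Proof.
move=> ne_xy; have := ncycles_mul_tperm s x y; rewrite ne_xy.
by case: (x \notin _) => /=; lia.
Qed.

Lemma ncycles_split s x : s x != x -> ncycles (s * tperm x (s x)) = (ncycles s).+1.
Proof.
move=> sx_x; have := ncycles_mul_tperm s x (s x).
have -> : x \in porbit s (s x) by rewrite porbit_sym -[s x]/((s ^+ 1) x) mem_porbit.
by rewrite eq_sym sx_x /=; lia.
Qed.

Lemma ncycles_le_card s : ncycles s <= #|T|.
Proof. exact: leq_imset_card. Qed.

Lemma ncycles1 : ncycles 1 = #|T|.
Proof.
rewrite /ncycles /porbits card_imset // => x y /eqP; rewrite eq_porbit_mem.
by rewrite porbit.unlock cycle1 imset_set1 /aperm perm1 inE => /eqP.
Qed.

Lemma ncycles_eq_card s : ncycles s = #|T| -> s = 1.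
Proof.
move=> cs; apply/permP => x; rewrite perm1; apply/eqP/negPn/negP => sx_x.
by have := ncycles_le_card (s * tperm x (s x)); rewrite ncycles_split // cs ltnn.
Qed.

Lemma ncycles_lt_card s : ncycles s < #|T| -> exists x, s x != x.
Proof.
move=> lt_sT; case: (pickP (fun x => s x != x)) => [x sx_x|fix_s]; first by exists x.
suff s1 : s = 1 by rewrite s1 ncycles1 ltnn in lt_sT.
by apply/permP => x; rewrite perm1; apply/eqP/negbFE/fix_s.
Qed.

End CycleCount.

Section CycleGeneratingFunction.
Variables (R : pzSemiRingType) (x : R) (n : nat).
Implicit Types (s u : {perm 'I_n}) (i : 'I_n).
Local Open Scope group_scope.

Definition fix_from (k : nat) : {set {perm 'I_n}} :=
  [set s : {perm 'I_n} | [forall i : 'I_n, (k <= i) ==> (s i == i)]].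

Lemma fix_from0 : fix_from 0 = [set 1].
Proof.
apply/setP => s; rewrite !inE; apply/forallP/eqP => [s1|-> i]; last first.
  by rewrite perm1 eqxx implybT.
by apply/permP => i; rewrite perm1; apply/eqP; exact: s1.
Qed.

Lemma fix_from_card : fix_from n = setT.
Proof. by apply/setP => s; rewrite !inE; apply/forallP => i; rewrite leqNgt ltn_ord. Qed.

Lemma fix_fromS_bound k (lt_kn : k < n) s :
  s \in fix_from k.+1 -> s (Ordinal lt_kn) <= k.
Proof.
rewrite inE => /forallP fix_s; rewrite leqNgt; apply/negP => lt_k_s.
have /perm_inj/(congr1 val)/= : s (s (Ordinal lt_kn)) = s (Ordinal lt_kn).
  exact/eqP/(implyP (fix_s _)).
by move=> eq_s; move: lt_k_s; rewrite eq_s ltnn.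
Qed.

(* Every s fixing the points >= k+1 is uniquely u * (j k) with u fixing the
   points >= k and j = s k <= k. *)
Lemma fix_fromS_mul_tperm k (lt_kn : k < n) (j : 'I_n) (le_jk : j <= k) u :
  (u * tperm j (Ordinal lt_kn) \in fix_from k.+1)
    && ((u * tperm j (Ordinal lt_kn)) (Ordinal lt_kn) == j)
  = (u \in fix_from k).
Proof.
set K := Ordinal lt_kn; set t := tperm j K.
have tperm_fix i : k < i -> t i = i.
  move=> lt_ki; rewrite permE /= !ifF //; apply/eqP => /(congr1 val)/= ei;
  by move: lt_ki; rewrite ei ?ltnn // ltnNge le_jk.
rewrite !inE; apply/andP/forallP => [[/forallP fix_ut /eqP utK] i|fix_u].
  apply/implyP; rewrite leq_eqVlt => /predU1P[ki|lt_ki].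
    have -> : i = K by apply: val_inj.
    by apply/eqP; apply: (perm_inj (s := t)); rewrite -permM utK tpermR.
  apply/eqP; apply: (perm_inj (s := t)); rewrite -permM tperm_fix //.
  exact/eqP/(implyP (fix_ut i) lt_ki).
split; last by rewrite permM (eqP (implyP (fix_u K) (leqnn k))) tpermR.
apply/forallP => i; apply/implyP => lt_ki.
by rewrite permM (eqP (implyP (fix_u i) (ltnW lt_ki))) tperm_fix.
Qed.

Lemma fix_from_mul_tperm_exp k (lt_kn : k < n) (j : 'I_n) u : u \in fix_from k ->
  (x ^+ (n - ncycles (u * tperm j (Ordinal lt_kn)))
    = x ^+ (n - ncycles u) * (if j == Ordinal lt_kn then 1 else x))%R.
Proof.
set K := Ordinal lt_kn => fix_u.
case: eqP => [->|/eqP ne_jK]; first by rewrite tperm1 mulg1 mulr1.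
have uK : u K = K by move: fix_u; rewrite inE => /forallP/(_ K)/implyP/(_ (leqnn k))/eqP.
have := ncycles_mul_tperm u j K; have := ncycles_le_card u; rewrite card_ord.
have -> : j \notin porbit u K.
  by apply: contra ne_jK => /porbitP[i ->]; rewrite permX iter_fix.
rewrite ne_jK /= -exprSr; set c := ncycles u; set c' := ncycles _.
by move=> ? ?; congr (x ^+ _)%R; lia.
Qed.

Lemma sum_tperm_weights k (lt_kn : k < n) :
  (\sum_(j : 'I_n | (j <= k)%N) (if j == Ordinal lt_kn then 1 else x) = 1 + k%:R * x)%R.
Proof.
rewrite (eq_bigr (fun j : 'I_n => if nat_of_ord j == k then 1%R else x)) //.
rewrite -(big_mkord (fun j => j <= k) (fun j => if j == k then 1%R else x)).
rewrite -(big_nat_widen 0 k.+1 n xpredT) // big_nat_recr //= eqxx.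
rewrite (eq_big_nat _ _ (F2 := fun => x)) => [|i /andP[_ lt_ik]]; last first.
  by rewrite ltn_eqF.
by rewrite sumr_const_nat subn0 mulr_natl addrC.
Qed.

Lemma sum_fix_from_exp k : k <= n ->
  (\sum_(s in fix_from k) x ^+ (n - ncycles s) = \prod_(0 <= t < k) (1 + t%:R * x))%R.
Proof.
elim: k => [_|k IHk lt_kn].
  by rewrite fix_from0 big_set1 big_nil ncycles1 card_ord subnn expr0.
rewrite big_nat_recr //= -IHk ?(ltnW lt_kn) //.
rewrite (partition_big (fun s => s (Ordinal lt_kn)) (fun j : 'I_n => j <= k));
  last exact: fix_fromS_bound.
rewrite -(sum_tperm_weights lt_kn) big_distrr; apply: eq_bigr => j le_jk.
rewrite (reindex_inj (mulIg (tperm j (Ordinal lt_kn)))) /=.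
rewrite (eq_bigl _ _ (fix_fromS_mul_tperm lt_kn le_jk)) mulr_suml.
by apply: eq_bigr => u fix_u; exact: fix_from_mul_tperm_exp.
Qed.

Lemma sum_perm_exp_ncycles :
  (\sum_(s : {perm 'I_n}) x ^+ (n - ncycles s) = \prod_(0 <= t < n) (1 + t%:R * x))%R.
Proof.
by rewrite -sum_fix_from_exp // fix_from_card; apply: eq_bigl => s; rewrite inE.
Qed.

End CycleGeneratingFunction.

Section AlternatingLength.
Variables (n : nat) (lt1n : 1 < n).
Implicit Types (u v s t : {perm 'I_n}) (i j : 'I_n).
Local Open Scope group_scope.

Definition s12 : {perm 'I_n} := tperm (Ordinal (ltnW lt1n)) (Ordinal lt1n).

Definition maxcycles v := maxn (ncycles v) (ncycles (v * s12)).

Definition lenT v := n - maxcycles v.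

Lemma s12K : s12 * s12 = 1.
Proof. exact: tperm2. Qed.

Lemma odd_s12 : odd_perm s12.
Proof. by rewrite odd_tperm; apply/eqP => /(congr1 val). Qed.

Lemma maxcycles_le v : maxcycles v <= n.
Proof.
by rewrite geq_max; have := ncycles_le_card v; have := ncycles_le_card (v * s12);
  rewrite card_ord => -> ->.
Qed.

Lemma TAnE t : (t \in TAn n) = [exists i, exists j, (i != j) && (t == s12 * tperm i j)].
Proof.
rewrite inE; apply/existsP/existsP => [[a /existsP[b /existsP[i /existsP[j]]]]|[i /existsP[j]]].
  case/and4P => /eqP a0 /eqP b1 lt_ij /eqP ->; exists i; apply/existsP; exists j.
  by rewrite neq_ltn lt_ij /s12; apply/eqP; congr (tperm _ _ * _); apply: val_inj.
case/andP => ne_ij /eqP ->; exists (Ordinal (ltnW lt1n)); apply/existsP.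
exists (Ordinal lt1n); case: (ltngtP i j) => [lt_ij|lt_ji|/val_inj eij].
- by apply/existsP; exists i; apply/existsP; exists j; rewrite lt_ij !eqxx.
- by apply/existsP; exists j; apply/existsP; exists i; rewrite lt_ji tpermC !eqxx.
- by rewrite eij eqxx in ne_ij.
Qed.

Lemma s12_conj_tperm i j : s12 * tperm i j * s12 = tperm (s12 i) (s12 j).
Proof. by rewrite -tpermJ conjgE /s12 tpermV mulgA. Qed.

Lemma TAn_mem i j : i != j -> s12 * tperm i j \in TAn n.
Proof.
by move=> ne_ij; rewrite TAnE; apply/existsP; exists i; apply/existsP; exists j;
  rewrite ne_ij eqxx.
Qed.

Lemma TAnV t : t \in TAn n -> t^-1 \in TAn n.
Proof.
rewrite TAnE => /existsP[i /existsP[j /andP[ne_ij /eqP ->]]].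
have -> : (s12 * tperm i j)^-1 = s12 * tperm (s12 i) (s12 j).
  by rewrite -s12_conj_tperm !mulgA s12K mul1g invMg !tpermV.
by apply: TAn_mem; rewrite (inj_eq perm_inj).
Qed.

Lemma TAn_even t : t \in TAn n -> ~~ odd_perm t.
Proof.
rewrite TAnE => /existsP[i /existsP[j /andP[ne_ij /eqP ->]]].
by rewrite odd_permM odd_s12 odd_tperm ne_ij.
Qed.

Lemma one_TAn : 1 \in TAn n.
Proof. by rewrite -s12K; apply: TAn_mem; apply/eqP => /(congr1 val). Qed.

Lemma lenT_mul_TAn v t : t \in TAn n -> lenT (v * t) <= (lenT v).+1.
Proof.
rewrite TAnE => /existsP[i /existsP[j /andP[_ /eqP ->]]].
have vt_s12 : v * (s12 * tperm i j) * s12 = v * tperm (s12 i) (s12 j).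
  by rewrite -s12_conj_tperm !mulgA.
have := ncycles_mul_tperm_ge (v * s12) i j.
have := ncycles_mul_tperm_ge v (s12 i) (s12 j).
have := maxcycles_le v; rewrite /lenT /maxcycles vt_s12 mulgA.
set a := ncycles v; set b := ncycles (v * s12).
set a' := ncycles (v * tperm _ _); set b' := ncycles (v * s12 * _); lia.
Qed.

Lemma lenT_prodsT r v : v \in prodsT n r -> lenT v <= r.
Proof.
elim: r v => [|r IHr] v /=.
  by rewrite inE => /eqP ->; rewrite /lenT /maxcycles leqn0 subn_eq0 ncycles1 card_ord leq_maxl.
case/imset2P => u t u_r tT ->.
by apply: leq_trans (lenT_mul_TAn u tT) _; rewrite ltnS IHr.
Qed.

Lemma prodsT_sub r : prodsT n r \subset prodsT n r.+1.
Proof. by apply/subsetP => v v_r; rewrite -[v]mulg1; apply: imset2_f => //; exact: one_TAn. Qed.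

Lemma lenT_eq0 v : ~~ odd_perm v -> lenT v = 0 -> v = 1.
Proof.
move=> even_v; have := maxcycles_le v; rewrite /lenT /maxcycles => ? ?.
have [le_cv|lt_cv] := leqP (ncycles (v * s12)) (ncycles v).
  by apply: ncycles_eq_card; rewrite card_ord; lia.
have /ncycles_eq_card v_s12 : ncycles (v * s12) = #|'I_n| by rewrite card_ord; lia.
by move: even_v; rewrite -[v]mulg1 -s12K mulgA v_s12 mul1g odd_s12.
Qed.

(* Split a cycle of whichever of v, v (12) has more cycles: right multiplication
   by (12)(ij) acts on v (12) as (ij), and on v as (12)(ij)(12). *)
Lemma exists_TAn_raise v : maxcycles v < n ->
  exists2 t, t \in TAn n & maxcycles v < maxcycles (v * t).
Proof.
move=> lt_vn; have [le_cv|lt_cv] := leqP (ncycles (v * s12)) (ncycles v).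
  have Mv : maxcycles v = ncycles v by rewrite /maxcycles (maxn_idPl le_cv).
  have [i vi_i] : exists i, v i != i by apply: ncycles_lt_card; rewrite card_ord -Mv.
  exists (s12 * tperm (s12 i) (s12 (v i))).
    by rewrite TAn_mem // (inj_eq perm_inj) eq_sym.
  have vt_s12 : v * (s12 * tperm (s12 i) (s12 (v i))) * s12 = v * tperm i (v i).
    by rewrite -(mulgA v) s12_conj_tperm /s12 !tpermK.
  by rewrite Mv /maxcycles vt_s12 leq_max ncycles_split // ltnSn orbT.
have Mv : maxcycles v = ncycles (v * s12) by rewrite /maxcycles (maxn_idPr (ltnW lt_cv)).
have [i wi_i] : exists i, (v * s12) i != i by apply: ncycles_lt_card; rewrite card_ord -Mv.
exists (s12 * tperm i ((v * s12) i)); first by rewrite TAn_mem // eq_sym.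
by rewrite Mv /maxcycles leq_max mulgA ncycles_split // ltnSn.
Qed.

Lemma lenT_lt u v : maxcycles u < maxcycles v -> lenT v < lenT u.
Proof. by rewrite /lenT; have := maxcycles_le v; lia. Qed.

Lemma prodsT_lenT k v : ~~ odd_perm v -> lenT v <= k -> v \in prodsT n k.
Proof.
elim: k v => [|k IHk] v even_v le_vk.
  by rewrite (lenT_eq0 even_v) ?inE //; lia.
have [le_vk'|lt_kv] := leqP (lenT v) k; first by apply: (subsetP (prodsT_sub k)); apply: IHk.
have [|t tT lt_v_vt] := @exists_TAn_raise v; first by rewrite /lenT in lt_kv; lia.
rewrite -[v]mulg1 -(mulgV t) mulgA; apply: imset2_f; last exact: TAnV.
apply: IHk; first by rewrite odd_permM (negbTE even_v) (negbTE (TAn_even tT)).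
by rewrite -ltnS (leq_trans (lenT_lt lt_v_vt)).
Qed.

Lemma ellT_lenT v : v \in Alt 'I_n -> ellT v = lenT v.
Proof.
rewrite Alt_even => even_v; rewrite /ellT.
case: excluded_middle_informative => [ex_r|[]]; last first.
  by exists (lenT v); exact: prodsT_lenT.
case: ex_minnP => m m_v min_m; apply/eqP; rewrite eqn_leq lenT_prodsT // andbT.
by apply: min_m; exact: prodsT_lenT.
Qed.

Lemma ellT_le v : v \in Alt 'I_n -> ellT v <= n.
Proof. by move=> /ellT_lenT ->; exact: leq_subr. Qed.

Lemma exp_ncycles_pair (R : pzSemiRingType) (x : R) v :
  (x ^+ (n - ncycles v) + x ^+ (n - ncycles (v * s12)) = (1 + x) * x ^+ lenT v)%R.
Proof.
have ne01 : Ordinal (ltnW lt1n) != Ordinal lt1n by apply/eqP => /(congr1 val).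
have := ncycles_le_card v; have := ncycles_le_card (v * s12); rewrite card_ord.
rewrite /lenT /maxcycles mulrDl mul1r -exprS.
have [->|->] := ncycles_mul_tperm_neq v ne01 => ? ?.
  by rewrite (maxn_idPr (leqnSn _)) addrC subnSK.
by rewrite (maxn_idPl (leqnSn _)) subnSK.
Qed.

Lemma sum_perm_exp_ncycles_Alt (R : pzSemiRingType) (x : R) :
  (\sum_(s : {perm 'I_n}) x ^+ (n - ncycles s)
    = (1 + x) * \sum_(v in Alt 'I_n) x ^+ lenT v)%R.
Proof.
rewrite (bigID (mem (Alt 'I_n))) /= [X in (_ + X)%R](reindex_inj (mulIg s12)) /=.
rewrite mulr_sumr.
under [RHS]eq_bigr do rewrite -exp_ncycles_pair.
rewrite big_split; congr (_ + _)%R; apply: eq_bigl => v.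
by rewrite !Alt_even odd_permM odd_s12 addbT negbK.
Qed.

End AlternatingLength.

Local Open Scope ring_scope.

Lemma sum_Xpow_fibers (I : finType) (A : {set I}) (f : I -> nat) (m : nat) :
  {in A, forall i, (f i <= m)%N} ->
  \sum_(i in A) 'X^(f i) = \sum_(k < m.+1) #|[set i in A | f i == k]|%:R *: ('X^k : {poly int}).
Proof.
move=> le_fm; rewrite (partition_big (fun i => inord (f i) : 'I_m.+1) xpredT) //=.
apply: eq_bigr => k _; rewrite scaler_nat -sumr_const.
apply: eq_big => [i|i /andP[Ai /eqP <-]]; last by rewrite inordK // ltnS le_fm.
rewrite inE; case Ai: (i \in A) => //=.
by rewrite -val_eqE /= inordK // ltnS le_fm.
Qed.

Lemma one_addX_neq0 : 1 + 'X != 0 :> {poly int}.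
Proof. by apply/eqP => /(congr1 (horner^~ 0)); rewrite !hornerE. Qed.

Unset Implicit Arguments.

Theorem theorem7p2 (n : nat) (hn : (2 <= n)%N) :
  (\sum_(v in Alt ('I_n)) 'X^(ellT v) : {poly int})
    = \sum_(k < n.+1) (aT n k)%:R *: 'X^k
  /\ \sum_(k < n.+1) ((aT n k)%:R *: 'X^k : {poly int})
    = \prod_(2 <= t < n) (1 + t%:R *: 'X).
Proof.
have fibers : \sum_(v in Alt ('I_n)) 'X^(ellT v)
                = \sum_(k < n.+1) (aT n k)%:R *: ('X^k : {poly int}).
  by rewrite /aT; apply: sum_Xpow_fibers => v /(ellT_le hn).
split=> //; rewrite -fibers; apply: (mulfI one_addX_neq0).
rewrite (eq_bigr (fun v => 'X^(lenT hn v))) => [|v /(ellT_lenT hn) ->] //.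
rewrite -sum_perm_exp_ncycles_Alt sum_perm_exp_ncycles.
rewrite (big_ltn (ltnW hn)) (big_ltn hn) /= mul0r addr0 !mul1r.
by congr (_ * _); apply: eq_bigr => t _; rewrite mulr_natl scaler_nat.
Qed.
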